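(* Let $\sigma$ be an involutive non-degenerate quiver-theoretic Yang--Baxter map on a nonempty quiver $\mathscr{A}$ over $\Lambda$, and let $E$ be the closure of (the image of) $\mathscr{A}$ under right-lcms in the structure category $\mathscr{C}(\sigma)$. Suppose there is a finite $n$ with $|\mathscr{A}(\lambda,\Lambda)|\le n$ for all $\lambda\in\Lambda$. Then every element of $E$ has length at most $n$. In particular $E\subsetneq\mathscr{C}(\sigma)$.
   Context: Write $\sigma(x,y)=(x\rightharpoonup y,x\leftharpoonup y)$. A quiver-theoretic Yang--Baxter map is a source/target-preserving map $\sigma$ on composable pairs satisfying the braid relation; involutive: $\sigma^2=\mathrm{id}$; non-degenerate: all $x\rightharpoonup\cdot\colon\mathscr{A}(\mathfrak{t}(x),\Lambda)\to\mathscr{A}(\mathfrak{s}(x),\Lambda)$ and $\cdot\leftharpoonup y\colon\mathscr{A}(\Lambda,\mathfrak{s}(y))\to\mathscr{A}(\Lambda,\mathfrak{t}(y))$ bijective. $\mathscr{A}(\lambda,\Lambda)$ is the set of arrows with source $\lambda$. $\mathscr{C}(\sigma)$ is the category presented by generators $\mathscr{A}$ and the length-preserving relations $x|y\sim(x\rightharpoonup y)|(x\leftharpoonup y)$, so the length of an element (length of any representing path) is well defined. *)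

From mathcomp Require Import ssreflect ssrfun ssrbool eqtype ssrnat seq.
Set Implicit Arguments. Unset Strict Implicit. Unset Printing Implicit Defensive.

(* A path (= morphism representative of the structure category C(sigma)) is a
   pair (lambda, [x1; ...; xk]) read left to right: x1 | x2 | ... | xk, starting
   at vertex lambda (the empty list is the identity at lambda).
   sigma(x,y) = (lact x y, ract x y) = (x -> y, x <- y); only its values on
   composable pairs (tgt x = src y) matter. *)

Section Quiver.
Variables (Lam A : Type) (src tgt : A -> Lam) (lact ract : A -> A -> A).

Definition composable (x y : A) : Prop := tgt x = src y.

Definition qYB_preserving : Prop :=
  forall x y, composable x y ->
    [/\ src (lact x y) = src x, tgt (lact x y) = src (ract x y)
      & tgt (ract x y) = tgt y].

Definition sig12 (w : A * A * A) : A * A * A :=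
  let: (x, y, z) := w in (lact x y, ract x y, z).
Definition sig23 (w : A * A * A) : A * A * A :=
  let: (x, y, z) := w in (x, lact y z, ract y z).

Definition braid : Prop :=
  forall x y z, composable x y -> composable y z ->
    sig12 (sig23 (sig12 (x, y, z))) = sig23 (sig12 (sig23 (x, y, z))).

Definition qYB_map : Prop := qYB_preserving /\ braid.

Definition involutive_qYB : Prop :=
  forall x y, composable x y ->
    lact (lact x y) (ract x y) = x /\ ract (lact x y) (ract x y) = y.

(* x -> . : A(t(x), Lam) -> A(s(x), Lam) and . <- y : A(Lam, s(y)) -> A(Lam, t(y))
   are bijections *)
Definition nondegenerate : Prop :=
  (forall x,
     (forall y1 y2, src y1 = tgt x -> src y2 = tgt x ->
        lact x y1 = lact x y2 -> y1 = y2) /\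
     (forall z, src z = src x -> exists2 y, src y = tgt x & lact x y = z)) /\
  (forall y,
     (forall x1 x2, tgt x1 = src y -> tgt x2 = src y ->
        ract x1 y = ract x2 y -> x1 = x2) /\
     (forall z, tgt z = tgt y -> exists2 x, tgt x = src y & ract x y = z)).

Definition path := (Lam * seq A)%type.

Fixpoint valid_from (l : Lam) (p : seq A) : Prop :=
  match p with
  | [::] => True
  | x :: q => src x = l /\ valid_from (tgt x) q
  end.

Fixpoint tgt_from (l : Lam) (p : seq A) : Lam :=
  match p with
  | [::] => l
  | x :: q => tgt_from (tgt x) q
  end.

Definition valid (f : path) : Prop := valid_from f.1 f.2.
Definition ptgt (f : path) : Lam := tgt_from f.1 f.2.
Definition plength (f : path) : nat := size f.2.

Inductive step : path -> path -> Prop :=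
| step_intro l u x y v : composable x y ->
    step (l, u ++ x :: y :: v) (l, u ++ lact x y :: ract x y :: v).

(* equality of morphisms in C(sigma): the congruence generated by the relations *)
Inductive pequiv : path -> path -> Prop :=
| pequiv_refl f : pequiv f f
| pequiv_step f g : step f g -> pequiv f g
| pequiv_sym f g : pequiv f g -> pequiv g f
| pequiv_trans f g h : pequiv f g -> pequiv g h -> pequiv f h.

Definition rmult (f h : path) : Prop :=
  exists2 r : seq A, valid_from (ptgt f) r & pequiv (f.1, f.2 ++ r) h.

Definition is_rlcm (f g h : path) : Prop :=
  [/\ valid h, rmult f h, rmult g h &
      forall h', valid h' -> rmult f h' -> rmult g h' -> rmult h h'].

Inductive lcm_closure : path -> Prop :=
| lcl_gen (x : A) (f : path) : pequiv f (src x, [:: x]) -> lcm_closure f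
| lcl_lcm (f g h : path) : lcm_closure f -> lcm_closure g -> is_rlcm f g h -> lcm_closure h.

End Quiver.

From mathcomp Require Import ssreflect ssrfun ssrbool eqtype ssrnat seq.
From Stdlib Require Import Classical.
Set Implicit Arguments. Unset Strict Implicit.

(* Fix a vertex l.  Non-degeneracy (surjectivity of x -> .) lets any arrow z out
   of l be pushed through a path w from l: w c = z w' for a suitable arrow c.
   Adding the at most n arrows out of l one at a time therefore produces a path
   Delta_l of length <= n that every arrow out of l left-divides.  Elements of E
   starting at l left-divide Delta_l, by induction on E using the universal
   property of right-lcms, and the relations preserve length, so they have length
   <= n.  Finally, the surjectivity of x -> . also yields paths of every length,
   in particular of length n + 1, and these are not in E. *)

Section StructureCategory.
Variables (Lam A : Type) (src tgt : A -> Lam) (lact ract : A -> A -> A).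

Local Notation "f ≡ g" := (pequiv src tgt lact ract f g) (at level 70).

Lemma tgt_from_cat l u v :
  tgt_from tgt l (u ++ v) = tgt_from tgt (tgt_from tgt l u) v.
Proof. by elim: u l => //= x u IH l. Qed.

Lemma valid_from_cat l u v :
  valid_from src tgt l (u ++ v) <->
  valid_from src tgt l u /\ valid_from src tgt (tgt_from tgt l u) v.
Proof. by elim: u l => [|x u IH] l /=; [tauto | rewrite IH; tauto]. Qed.

Lemma pequiv_catl l u f g : f ≡ g -> (l, u ++ f.2) ≡ (l, u ++ g.2).
Proof.
elim=> [f0 | _ _ [l0 u0 x y v Hxy] | f0 g0 _ IH | f0 g0 h0 _ IH1 _ IH2].
- exact: pequiv_refl.
- by apply: pequiv_step; rewrite !catA; apply: step_intro.
- exact: pequiv_sym.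
- exact: pequiv_trans IH1 IH2.
Qed.

Lemma pequiv_catr r f g : f ≡ g -> (f.1, f.2 ++ r) ≡ (g.1, g.2 ++ r).
Proof.
elim=> [f0 | _ _ [l0 u0 x y v Hxy] | f0 g0 _ IH | f0 g0 h0 _ IH1 _ IH2].
- exact: pequiv_refl.
- by apply: pequiv_step; rewrite -!catA; apply: step_intro.
- exact: pequiv_sym.
- exact: pequiv_trans IH1 IH2.
Qed.

Definition ldivides (l : Lam) (x : A) (w : seq A) : Prop :=
  exists2 r, valid_from src tgt (tgt x) r & (l, x :: r) ≡ (l, w).

Hypothesis preserving : qYB_preserving src tgt lact ract.

Lemma pequiv_invariant f g :
  f ≡ g -> [/\ f.1 = g.1, plength f = plength g & ptgt tgt f = ptgt tgt g].
Proof.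
rewrite /plength /ptgt.
elim=> [f0 | _ _ [l u x y v Hxy] | f0 g0 _ [? ? ?] | f0 g0 h0 _ [? ? ?] _ [? ? ?]].
- by [].
- split=> //=; first by rewrite !size_cat.
  by rewrite !tgt_from_cat /=; case: (preserving Hxy) => _ _ ->.
- by [].
- split; congruence.
Qed.

Lemma plength_rmult f h : rmult src tgt lact ract f h -> plength f <= plength h.
Proof.
case=> r _ /pequiv_invariant [_ <- _].
by rewrite /plength size_cat leq_addr.
Qed.

Lemma rmult_start f h : rmult src tgt lact ract f h -> f.1 = h.1.
Proof. by case=> r _ /pequiv_invariant []. Qed.

Lemma ldivides_rcons l x w c :
  src c = tgt_from tgt l w -> ldivides l x w -> ldivides l x (w ++ [:: c]).
Proof.
move=> Hc [r Hr Hxr]; exists (r ++ [:: c]); last exact: (pequiv_catr [:: c] Hxr).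
apply/valid_from_cat; split=> //=; split=> //.
by rewrite Hc; case: (pequiv_invariant Hxr) => _ _; rewrite /ptgt /= => <-.
Qed.

Hypothesis nondeg : nondegenerate src tgt lact ract.

Lemma ldivides_rcons_exists l w z :
  valid_from src tgt l w -> src z = l ->
  exists2 c, src c = tgt_from tgt l w & ldivides l z (w ++ [:: c]).
Proof.
case: nondeg => Hsurj _.
elim: w l z => [|x w IH] l z /=.
  by move=> _ Hz; exists z => //; exists [::] => //; apply: pequiv_refl.
move=> [Hx Hw] Hz.
have [y Hy Hxy] := (Hsurj x).2 z (etrans Hz (esym Hx)).
have [c Hc [w' Hw' Hyw']] := IH _ _ Hw Hy.
exists c => //.
have Hcomp : composable src tgt x y by rewrite /composable Hy.
have [_ Htl Htr] := preserving Hcomp.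
exists (ract x y :: w'); first by rewrite /= -Hxy Htl Htr.
rewrite -Hxy; apply: pequiv_trans (pequiv_catl l [:: x] Hyw').
apply/pequiv_sym/pequiv_step.
exact: (@step_intro _ _ _ _ lact ract l [::] x y w' Hcomp).
Qed.

Lemma common_rmultiple_of_arrows l (enc : A -> nat) m :
  (forall x y, src x = l -> src y = l -> enc x = enc y -> x = y) ->
  exists w, [/\ valid_from src tgt l w, size w <= m &
    forall x, src x = l -> enc x < m -> ldivides l x w].
Proof.
move=> enc_inj; elim: m => [|m [w [Hw Hsize Hdiv]]]; first by exists [::].
have Hdiv_lt x : src x = l -> enc x < m.+1 -> enc x <> m -> ldivides l x w.
  by move=> Hx; rewrite ltnS leq_eqVlt => /orP [/eqP -> //| /(Hdiv x Hx)].
case: (classic (exists2 z, src z = l & enc z = m)) => [[z Hz Hzm] | Hnone].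
- have [c Hc Hzc] := ldivides_rcons_exists Hw Hz.
  exists (w ++ [:: c]); split.
  + by apply/valid_from_cat.
  + by rewrite size_cat addn1.
  + move=> x Hx Hlt; case: (eqVneq (enc x) m) => [Hxm | /eqP Hxm].
      by rewrite (enc_inj x z) // Hxm Hzm.
    exact: ldivides_rcons (Hdiv_lt x Hx Hlt Hxm).
- exists w; split=> // [|x Hx Hlt]; first exact: leqW.
  by apply: Hdiv_lt => // Hxm; apply: Hnone; exists x.
Qed.

Lemma lcm_closure_rmult_common_multiple f w :
  lcm_closure src tgt lact ract f -> valid_from src tgt f.1 w ->
  (forall x, src x = f.1 -> ldivides f.1 x w) ->
  rmult src tgt lact ract f (f.1, w).
Proof.
move=> Ef; elim: f / Ef w => [x f Hfx | f g h _ IHf _ IHg [_ Hfh Hgh Hmin]] w Hw Hdiv.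
- have [Hstart _ Htgt] := pequiv_invariant Hfx.
  have [r Hr Hxr] := Hdiv x (esym Hstart).
  exists r; first by rewrite Htgt.
  apply: pequiv_trans (pequiv_catr r Hfx) _.
  by rewrite Hstart in Hxr *.
- apply: Hmin => //.
  + by rewrite (rmult_start Hfh) in IHf; apply: IHf.
  + by rewrite (rmult_start Hgh) in IHg; apply: IHg.
Qed.

Lemma valid_path_of_size k l :
  (exists x, src x = l) -> exists2 p, valid_from src tgt l p & size p = k.
Proof.
case: nondeg => Hsurj _.
elim: k l => [|k IH] l [x Hx]; first by exists [::].
have [y Hy _] := (Hsurj x).2 x erefl.
have [p Hp Hsize] := IH (tgt x) (ex_intro _ y Hy).
by exists (x :: p) => /=; [split | rewrite Hsize].
Qed.

End StructureCategory.

Theorem corollary5p13 (Lam A : Type) (src tgt : A -> Lam) (lact ract : A -> A -> A)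
  (n : nat) :
  qYB_map src tgt lact ract ->
  involutive_qYB src tgt lact ract ->
  nondegenerate src tgt lact ract ->
  (exists x : A, True) ->
  (forall l : Lam, exists enc : A -> nat,
     (forall x, src x = l -> enc x < n) /\
     (forall x y, src x = l -> src y = l -> enc x = enc y -> x = y)) ->
  (forall f : path Lam A, lcm_closure src tgt lact ract f -> plength f <= n) /\
  (exists f : path Lam A, valid src tgt f /\ ~ lcm_closure src tgt lact ract f).
Proof.
move=> [preserving _] _ nondeg [x0 _] bounded_out_degree.
have E_short f : lcm_closure src tgt lact ract f -> plength f <= n.
  move=> Ef; have [enc [enc_lt enc_inj]] := bounded_out_degree f.1.
  have [delta [Hdelta Hsize Hdiv]] := common_rmultiple_of_arrows preserving nondeg n enc_inj.
  have Hf_delta := lcm_closure_rmult_common_multiple preserving Ef Hdelta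
    (fun x Hx => Hdiv x Hx (enc_lt x Hx)).
  exact: leq_trans (plength_rmult preserving Hf_delta) Hsize.
split=> //.
have [p Hp Hsize] := valid_path_of_size nondeg n.+1 (ex_intro _ x0 erefl).
exists (src x0, p); split=> // /E_short.
by rewrite /plength Hsize ltnn.
Qed.
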